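(* Consider the following second-order cone optimal control problem over time steps $k=0,\dots,K-1$ and EVs $n=1,\dots,N$: \begin{align*} \min\;& \sum_{n=1}^N\sum_{k=0}^{K-1} q_n\,(s_n(k+1)-1)^2 + r_n\,(i_n(k))^2\\ \text{s.t. }& T(k+1)=\tau T(k)+\gamma e(k)+\rho T_a(k),\\ & e(k)\ge (i_{\text{total}}(k))^2,\\ & s_n(k+1)=s_n(k)+\eta_n i_n(k),\\ & i_{\text{total}}(k)=i_d(k)+\sum_{n=1}^N i_n(k),\\ & T(k+1)\le T^{\max},\\ & s_n(k+1)\in[\hat s_n(k+1),1],\\ & i_n(k)\in[0,i_n^{\max}],\\ & T(0)=T_{\text{meas}},\quad s_n(0)=s_{\text{meas},n}. \end{align*} Take an optimal solution together with associated Lagrange multipliers: $\mu_T^{k+1}\ge 0$ for the constraint $T(k+1)\le T^{\max}$, and $\mu_e^k\ge 0$ for the constraint $e(k)\ge(i_{\text{total}}(k))^2$. Then $k+1$ is the last time instance for which the temperature limit $T(k+1)\le T^{\max}$ is strictly active if and only if $k$ is the largest integer for which the relaxed constraint $e(k)\ge (i_{\text{total}}(k))^2$ is tight.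
   Context: Parameters: - $\tau=e^{-b\Delta t}\in(0,1)$ with $b,\Delta t>0$, and $\rho=1-\tau$; - $\gamma>0$; - $T_a(k)$ is a given ambient temperature sequence; - $i_d(k)\ge0$ is a given background current; - $q_n>0$, $r_n\ge 0$, $\eta_n>0$ and $i_n^{\max}>0$ are EV parameters; - $\hat s_n(k+1)=\bar s_n$ if $k+1\ge\bar k_n$ and $0$ otherwise, where $\bar s_n\in[0,1]$ and $\bar k_n\in\{0,\dots,K\}$. Following the paper's convention, the temperature limit is ''strictly active'' at $k+1$ when its multiplier satisfies $\mu_T^{k+1}>0$. The relaxed constraint is ''tight'' at $k$ when its multiplier satisfies $\mu_e^k>0$, in which case $e(k)=(i_{\text{total}}(k))^2$. *)

From HB Require Import structures.
From mathcomp Require Import all_boot all_order all_algebra.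
From mathcomp Require Import all_classical all_reals.
From mathcomp Require Import sequences exp.
Set Implicit Arguments. Unset Strict Implicit. Unset Printing Implicit Defensive.
Import Order.TTheory GRing.Theory Num.Theory.
Local Open Scope ring_scope.

(* Problem data.  Time index k : nat (relevant range 0..K), EV index n : 'I_N. *)
Record ocp_data (R : realType) (N : nat) := OcpData {
  K : nat;
  b : R; dt : R;
  gamma : R;
  Ta : nat -> R;
  idc : nat -> R;
  q : 'I_N -> R; r : 'I_N -> R; eta : 'I_N -> R; imax : 'I_N -> R;
  sbar : 'I_N -> R; kbar : 'I_N -> nat;
  Tmax : R; Tmeas : R; smeas : 'I_N -> R }.

Definition tau R N (p : ocp_data R N) : R := expR (- (b p * dt p)).
Definition rho R N (p : ocp_data R N) : R := 1 - tau p.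

Definition shat R N (p : ocp_data R N) (n : 'I_N) (j : nat) : R :=
  if (kbar p n <= j)%N then sbar p n else 0.

Definition data_ok R N (p : ocp_data R N) : Prop :=
  0 < b p /\ 0 < dt p /\ 0 < gamma p /\
  (forall k, 0 <= idc p k) /\
  (forall n, 0 < q p n /\ 0 <= r p n /\ 0 < eta p n /\ 0 < imax p n /\
             0 <= sbar p n <= 1 /\ (kbar p n <= K p)%N).

Record ocp_var (R : realType) (N : nat) := OcpVar {
  T : nat -> R; e : nat -> R; itot : nat -> R;
  s : 'I_N -> nat -> R; i : 'I_N -> nat -> R }.

Definition feasible R N (p : ocp_data R N) (x : ocp_var R N) : Prop :=
  T x 0 = Tmeas p /\ (forall n, s x n 0 = smeas p n) /\
  forall k, (k < K p)%N ->
    [/\ T x k.+1 = tau p * T x k + gamma p * e x k + rho p * Ta p k,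
        itot x k ^+ 2 <= e x k,
        itot x k = idc p k + \sum_(n < N) i x n k,
        T x k.+1 <= Tmax p &
        forall n, [/\ s x n k.+1 = s x n k + eta p n * i x n k,
                      shat p n k.+1 <= s x n k.+1 <= 1 &
                      0 <= i x n k <= imax p n]].

Definition cost R N (p : ocp_data R N) (x : ocp_var R N) : R :=
  \sum_(n < N) \sum_(k < K p)
     (q p n * (s x n k.+1 - 1) ^+ 2 + r p n * (i x n k) ^+ 2).

Definition optimal R N (p : ocp_data R N) (x : ocp_var R N) : Prop :=
  feasible p x /\ forall y, feasible p y -> cost p x <= cost p y.

(* The Lagrangian used is
   L = cost
     + sum_k lamT k    * (T(k+1) - tau T(k) - gamma e(k) - rho Ta(k))
     + sum_k muE k     * (itot(k)^2 - e(k))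
     + sum_k lamI k    * (itot(k) - i_d(k) - sum_n i_n(k))
     + sum_{n,k} lamS n k * (s_n(k+1) - s_n(k) - eta_n i_n(k))
     + sum_{j=1..K} muT j * (T(j) - Tmax)
     + sum_{n,j=1..K} (muSlo n j * (shat_n(j) - s_n(j)) + muShi n j * (s_n(j) - 1))
     + sum_{n,k} (muIlo n k * (- i_n(k)) + muIhi n k * (i_n(k) - imax_n))
     + nuT * (T(0) - Tmeas) + sum_n nuS n * (s_n(0) - smeas_n)
   with k ranging over 0..K-1.  muT and muE are the multipliers of the
   statement (muT j = mu_T^j, muE k = mu_e^k). *)
Record ocp_mult (R : realType) (N : nat) := OcpMult {
  lamT : nat -> R; muE : nat -> R; lamI : nat -> R; muT : nat -> R;
  lamS : 'I_N -> nat -> R; muSlo : 'I_N -> nat -> R; muShi : 'I_N -> nat -> R;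
  muIlo : 'I_N -> nat -> R; muIhi : 'I_N -> nat -> R;
  nuT : R; nuS : 'I_N -> R }.

Definition KKT R N (p : ocp_data R N) (x : ocp_var R N) (m : ocp_mult R N) : Prop :=
  (forall k, (k < K p)%N ->
     [/\ 0 <= muE m k, muE m k * (itot x k ^+ 2 - e x k) = 0,
         0 <= muT m k.+1, muT m k.+1 * (T x k.+1 - Tmax p) = 0 &
         forall n,
           [/\ 0 <= muSlo m n k.+1 /\
                 muSlo m n k.+1 * (shat p n k.+1 - s x n k.+1) = 0,
               0 <= muShi m n k.+1 /\ muShi m n k.+1 * (s x n k.+1 - 1) = 0,
               0 <= muIlo m n k /\ muIlo m n k * i x n k = 0 &
               0 <= muIhi m n k /\ muIhi m n k * (i x n k - imax p n) = 0]]) /\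
  (* stationarity in T(0), T(j) (1 <= j <= K-1), T(K) *)
  ((0 < K p)%N -> - (tau p * lamT m 0) + nuT m = 0) /\
  (forall j, (0 < j)%N -> (j < K p)%N ->
     lamT m j.-1 - tau p * lamT m j + muT m j = 0) /\
  ((0 < K p)%N -> lamT m (K p).-1 + muT m (K p) = 0) /\
  (* stationarity in e(k), itot(k), i_n(k) for k < K *)
  (forall k, (k < K p)%N ->
     [/\ - (gamma p * lamT m k) - muE m k = 0,
         2 * muE m k * itot x k + lamI m k = 0 &
         forall n, 2 * r p n * i x n k - eta p n * lamS m n k - lamI m k
                   - muIlo m n k + muIhi m n k = 0]) /\
  (* stationarity in s_n(0) and s_n(j) (1 <= j <= K) *)
  (forall n, (0 < K p)%N -> - lamS m n 0 + nuS m n = 0) /\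
  (forall n j, (0 < j)%N -> (j <= K p)%N ->
     2 * q p n * (s x n j - 1) + lamS m n j.-1
       - (if (j < K p)%N then lamS m n j else 0)
       - muSlo m n j + muShi m n j = 0).

(* The costate [lamT] of the temperature dynamics, extended by [0] at time
   [K], satisfies the backward recursion
   [lamT k = tau lamT (k+1) - muT (k+1)], while stationarity in [e(k)] gives
   [muE k = - gamma lamT k].  Hence both conditions of the theorem say the same
   thing about the costate: it is negative at [k] and vanishes afterwards. *)
From HB Require Import structures.
From mathcomp Require Import all_boot all_order all_algebra.
From mathcomp Require Import all_classical all_reals.
From mathcomp Require Import sequences exp.
From mathcomp Require Import zify lra.
Set Implicit Arguments. Unset Strict Implicit. Unset Printing Implicit Defensive.
Import Order.TTheory GRing.Theory Num.Theory.
Local Open Scope ring_scope.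

Lemma nonneg_not_gt0 (R : numDomainType) (x : R) : 0 <= x -> ~ 0 < x <-> x = 0.
Proof.
rewrite le0r => /orP[/eqP-> | x_gt0]; first by rewrite ltxx.
by split=> // x0; move: x_gt0; rewrite x0 ltxx.
Qed.

Section BackwardCostate.
Variables (R : realDomainType) (K : nat) (tau : R) (lam mu : nat -> R).
Hypothesis lam_K : lam K = 0.
Hypothesis lam_rec : forall j, (j < K)%N -> lam j = tau * lam j.+1 - mu j.+1.
Hypothesis mu_ge0 : forall j, (0 < j)%N -> (j <= K)%N -> 0 <= mu j.

Lemma costate_eq0_after k :
  (forall j, (k.+1 < j)%N -> (j <= K)%N -> mu j = 0) ->
  forall j, (k < j)%N -> (j <= K)%N -> lam j = 0.
Proof.
move=> mu0; suff: forall d j, (K - j)%N = d -> (k < j)%N -> (j <= K)%N -> lam j = 0.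
  by move=> lam0 j; exact: lam0.
elim=> [|d IHd] j dj ltkj lejK.
  by have -> : j = K by lia.
rewrite lam_rec; last lia.
by rewrite (IHd j.+1) ?(mu0 j.+1); try lia; rewrite mulr0 subr0.
Qed.

Lemma last_active_costate k : (k < K)%N ->
  (0 < mu k.+1 /\ forall j, (k.+1 < j)%N -> (j <= K)%N -> ~ 0 < mu j) <->
  (lam k < 0 /\ forall j, (k < j)%N -> (j <= K)%N -> lam j = 0).
Proof.
move=> ltkK; split=> [[mu_gt0 mu_not_gt0] | [lam_lt0 lam0]].
  have mu0 j : (k.+1 < j)%N -> (j <= K)%N -> mu j = 0.
    move=> ltkj lejK; apply/nonneg_not_gt0; last exact: mu_not_gt0.
    by apply: mu_ge0; lia.
  have lam0 := @costate_eq0_after k mu0.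
  split=> //; rewrite lam_rec // lam0 //; lra.
have lam_k : lam k = - mu k.+1 by rewrite lam_rec // lam0 //; lra.
split=> [|j ltkj lejK]; first lra.
apply/nonneg_not_gt0; first by apply: mu_ge0; lia.
have := @lam_rec j.-1 (ltac:(lia)); rewrite prednK; last lia.
by rewrite (lam0 j) ?(lam0 j.-1); try lia; lra.
Qed.

Lemma last_tight_costate (gamma : R) (nu : nat -> R) k :
  0 < gamma -> (forall j, (j < K)%N -> nu j = - (gamma * lam j)) ->
  (forall j, (j < K)%N -> 0 <= nu j) -> (k < K)%N ->
  (0 < nu k /\ forall j, (k < j)%N -> (j < K)%N -> ~ 0 < nu j) <->
  (lam k < 0 /\ forall j, (k < j)%N -> (j <= K)%N -> lam j = 0).
Proof.
move=> gamma_gt0 nu_lam nu_ge0 ltkK.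
have nu_gt0 j : (j < K)%N -> (0 < nu j) = (lam j < 0).
  by move=> ltjK; rewrite nu_lam // oppr_gt0 pmulr_rlt0.
rewrite nu_gt0 //; split=> [[lam_lt0 nu_not_gt0] | [lam_lt0 lam0]]; split=> // j ltkj.
  rewrite leq_eqVlt => /orP[/eqP-> // | ltjK].
  have /nonneg_not_gt0[nu_j0 _] := nu_ge0 j ltjK.
  have /eqP := nu_j0 (nu_not_gt0 j ltkj ltjK).
  by rewrite nu_lam // oppr_eq0 mulf_eq0 gt_eqF //= => /eqP.
by move=> ltjK; rewrite nu_gt0 // lam0 ?ltxx //; lia.
Qed.

End BackwardCostate.

Definition costate R N (p : ocp_data R N) (m : ocp_mult R N) (j : nat) : R :=
  if (j < K p)%N then lamT m j else 0.

Section KKTCostate.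
Variables (R : realType) (N : nat) (p : ocp_data R N) (x : ocp_var R N)
  (m : ocp_mult R N).
Hypothesis kkt : KKT p x m.

Lemma costate_K : costate p m (K p) = 0.
Proof. by rewrite /costate ltnn. Qed.

Lemma costate_rec j : (j < K p)%N ->
  costate p m j = tau p * costate p m j.+1 - muT m j.+1.
Proof.
move: kkt => [_ [_ [stat_T [stat_TK _]]]] ltjK.
rewrite /costate ltjK; case: ltnP => [ltj1K | leKj1].
  by have := stat_T j.+1 isT ltj1K => /=; lra.
have eKj : K p = j.+1 by lia.
by have := stat_TK (ltac:(lia)); rewrite eKj /=; lra.
Qed.

Lemma muT_ge0 j : (0 < j)%N -> (j <= K p)%N -> 0 <= muT m j.
Proof.
move: kkt => [dual _] lt0j lejK.
by have [_ _ ] := dual j.-1 (ltac:(lia)); rewrite prednK.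
Qed.

Lemma muE_ge0 j : (j < K p)%N -> 0 <= muE m j.
Proof. by move: kkt => [dual _] ltjK; have [] := dual j ltjK. Qed.

Lemma muE_costate j : (j < K p)%N -> muE m j = - (gamma p * costate p m j).
Proof.
move: kkt => [_ [_ [_ [_ [stat_e _]]]]] ltjK.
by have [stat_ej _ _] := stat_e j ltjK; rewrite /costate ltjK; lra.
Qed.

End KKTCostate.

Theorem corollary1 (R : realType) (N : nat) (p : ocp_data R N)
    (x : ocp_var R N) (m : ocp_mult R N) :
  data_ok p -> optimal p x -> KKT p x m ->
  forall k : nat, (k < K p)%N ->
    ((0 < muT m k.+1 /\
      forall j : nat, (k.+1 < j)%N -> (j <= K p)%N -> ~ (0 < muT m j))
     <->
     (0 < muE m k /\
      forall j : nat, (k < j)%N -> (j < K p)%N -> ~ (0 < muE m j))).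
Proof.
move=> [_ [_ [gamma_gt0 _]]] _ kkt k ltkK.
have muT_last := last_active_costate (costate_K p m) (costate_rec kkt)
  (muT_ge0 kkt) ltkK.
have muE_last := last_tight_costate (costate_K p m) gamma_gt0
  (muE_costate kkt) (muE_ge0 kkt) ltkK.
exact: iff_trans muT_last (iff_sym muE_last).
Qed.
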